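(* Let $n\ge 3$, $m\ge 1$, and let $f=x_0^{a_0}x_1^{a_1}\cdots x_{n+1}^{a_{n+1}}$ be a monomial. Define $g=x_0^{b_0}x_1^{b_1}\cdots x_{n+1}^{b_{n+1}}$ with $b_0=a_0$, $b_{n+1}=a_{n+1}$ and $b_i=\max\{a_i-1,0\}$ for $i=1,\dots,n$. If $f\in I_{B_n}^{(m)}$, then $g\in I_{B_n}^{(m-(n-2))}$. Moreover $\deg(g)\ge\deg(f)-n$, with equality if $a_i\ne 0$ for all $i=1,\dots,n$.
   Context: Let $k$ be a field. $Q_n$ is the cycle graph on vertices $1,\dots,n$ (edges $\{i,i+1\}$ for $1\le i\le n-1$ and $\{n,1\}$). $B_n$ is the simplicial complex on $\{0,\dots,n+1\}$ with facets $\{0,i,j\}$ and $\{n+1,i,j\}$ for each edge $\{i,j\}$ of $Q_n$, and $I_{B_n}\subset R=k[x_0,\dots,x_{n+1}]$ is its Stanley-Reisner ideal, generated by $\prod_{i\in\tau}x_i$ over non-faces $\tau$ of $B_n$. For a homogeneous ideal $I$, $I^{(m)}=R\cap\bigcap_{P\in\mathrm{Ass}(I)}I^mR_P$ for $m\ge1$, and by convention $I^{(j)}=R$ for $j\le 0$. *)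

From HB Require Import structures.
From mathcomp Require Import all_boot all_order all_algebra.
From mathcomp Require Import mpoly.
Set Implicit Arguments. Unset Strict Implicit. Unset Printing Implicit Defensive.
Import Order.TTheory GRing.Theory Num.Theory.
Local Open Scope ring_scope.

Definition ideal_gen (R : comNzRingType) (S : R -> Prop) (f : R) : Prop :=
  exists s : seq (R * R),
    (forall p, p \in s -> S p.2) /\ f = \sum_(p <- s) p.1 * p.2.

Definition ideal_pow (R : comNzRingType) (I : R -> Prop) (m : nat) : R -> Prop :=
  ideal_gen (fun g => exists s : seq R,
     size s = m /\ (forall x, x \in s -> I x) /\ g = \prod_(x <- s) x).

Definition is_ideal (R : comNzRingType) (P : R -> Prop) : Prop :=
  [/\ P 0, (forall a b, P a -> P b -> P (a + b)) & (forall r a, P a -> P (r * a))].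

Definition is_prime_ideal (R : comNzRingType) (P : R -> Prop) : Prop :=
  [/\ is_ideal P, ~ P 1 & (forall a b, P (a * b) -> P a \/ P b)].

(* P in Ass(I): P is a prime of the form (I : h). *)
Definition associated_prime (R : comNzRingType) (I P : R -> Prop) : Prop :=
  is_prime_ideal P /\ exists h : R, forall x, P x <-> I (x * h).

(* I^(j) = R \cap \bigcap_{P in Ass I} I^j R_P for j >= 1, and R for j <= 0.
   f/1 in I^j R_P  iff  s f in I^j for some s not in P. *)
Definition symbolic_power (R : comNzRingType) (I : R -> Prop) (j : int) (f : R) : Prop :=
  (j <= 0)%R \/
  forall P, associated_prime I P -> exists s, ~ P s /\ ideal_pow I `|j|%N (s * f).

(* Edges of the cycle Q_n on vertices 1..n (ordered pair version). *)
Definition Qedge (n i j : nat) : bool :=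
  ((1 <= i)%N && (i < n)%N && (j == i.+1)) || ((i == n) && (j == 1%N)).

Definition Qedge_sym (n i j : nat) : bool := Qedge n i j || Qedge n j i.

Definition B_facet (n : nat) (F : {set 'I_(n.+2)}) : bool :=
  [exists i : 'I_(n.+2), exists j : 'I_(n.+2),
     Qedge_sym n i j &&
     ((F == [set ord0; i; j]) || (F == [set (@ord_max n.+1); i; j]))].

Arguments B_facet : clear implicits.

Definition B_face (n : nat) (t : {set 'I_(n.+2)}) : bool :=
  [exists F : {set 'I_(n.+2)}, B_facet n F && (t \subset F)].

Arguments B_face : clear implicits.


Definition I_B (k : fieldType) (n : nat) : {mpoly k[n.+2]} -> Prop :=
  ideal_gen (fun g => exists t : {set 'I_(n.+2)},
     ~~ B_face n t /\ g = \prod_(i in t) 'X_i).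
Arguments I_B : clear implicits.
Arguments symbolic_power : clear implicits.

From HB Require Import structures.
From mathcomp Require Import all_boot all_order all_algebra.
From mathcomp Require Import mpoly zify.
From Stdlib Require Import Classical.
Set Implicit Arguments. Unset Strict Implicit. Unset Printing Implicit Defensive.
Import Order.TTheory GRing.Theory Num.Theory.
Local Open Scope ring_scope.

(* For a facet G of B_n let P_G be the prime generated by the variables
   outside G.  The Stanley-Reisner ideal I is the intersection of the P_G, so
   every associated prime of I is some P_G, and a monomial x^a lies in
   I^m R_{P_G} exactly when its degree in the variables outside G is at least
   m.  Conversely, x^(w + r 1_G) lies in I^r as soon as w has degree at least
   r outside G, because x_j * prod_(i in G) x_i is a non-face generator for
   every j outside G.  Lowering the exponents of the cycle vertices by one
   lowers the degree outside G by at most n - 2, since each facet contains two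
   cycle vertices. *)

Section MultinomOff.
Variable N : nat.
Implicit Types (A G : {set 'I_N}) (u v : 'X_{1..N}).

Definition deg_off G u : nat := (\sum_(i < N | i \notin G) u i)%N.

Definition mnm_ind A (r : nat) : 'X_{1..N} :=
  [multinom (if i \in A then r else 0%N) | i < N].

Lemma deg_offD G u v : deg_off G (u + v)%MM = (deg_off G u + deg_off G v)%N.
Proof. by rewrite /deg_off -big_split; apply: eq_bigr => i _; rewrite mnmDE. Qed.

Lemma mdeg_deg_off u : mdeg u = deg_off set0 u.
Proof. by rewrite mdegE /deg_off; apply: eq_bigl => i; rewrite in_set0. Qed.

Lemma deg_off_sub G u v : (deg_off G u <= deg_off G (u - v)%MM + deg_off G v)%N.
Proof.
by rewrite -deg_offD; apply: leq_sum => i _; rewrite mnmDE mnmBE; lia.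
Qed.

Lemma deg_off_subK G u v : (v <= u)%MM ->
  (deg_off G (u - v)%MM + deg_off G v)%N = deg_off G u.
Proof. by move=> le_vu; rewrite -deg_offD submK. Qed.

Lemma deg_off_mnm_ind G A r : deg_off G (mnm_ind A r) = (#|A :\: G| * r)%N.
Proof.
rewrite -sum_nat_const /deg_off big_mkcond [RHS]big_mkcond /=.
by apply: eq_bigr => i _; rewrite mnmE !inE andbC; case: (i \in A); case: (i \in G).
Qed.

Lemma deg_off_U G j : j \notin G -> deg_off G U_(j) = 1%N.
Proof.
move=> jG; rewrite /deg_off (bigD1 j) //= mnm1E eqxx big1 // => i /andP[_ ij].
by rewrite mnm1E eq_sym (negbTE ij).
Qed.

End MultinomOff.

Section DegOffIdeal.
Variables (R : idomainType) (N : nat).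
Local Notation MP := {mpoly R[N]}.
Implicit Types (A G : {set 'I_N}) (u v : 'X_{1..N}) (x y : MP).

Lemma prod_X_set A : \prod_(i in A) 'X_i = 'X_[mnm_ind A 1] :> MP.
Proof.
rewrite mprodXE; congr 'X_[_]; apply/mnmP => j; rewrite mnm_sumE mnmE.
case: (boolP (j \in A)) => jA.
  rewrite (bigD1 j) //= mnm1E eqxx big1 // => i /andP[_ /negbTE].
  by rewrite mnm1E => ->.
rewrite big1 // => i iA; rewrite mnm1E; case: eqP => // ij.
by move: jA; rewrite -ij iA.
Qed.

(* [deg_off_ge G r x] is membership of x in P_G^r. *)
Definition deg_off_ge G (r : nat) x : Prop :=
  forall u, x@_u != 0 -> (r <= deg_off G u)%N.

Lemma deg_off_ge_zero G r : deg_off_ge G r 0.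
Proof. by move=> u; rewrite mcoeff0 eqxx. Qed.

Lemma deg_off_geD G r x y :
  deg_off_ge G r x -> deg_off_ge G r y -> deg_off_ge G r (x + y).
Proof.
move=> hx hy u; rewrite mcoeffD.
by case: (eqVneq x@_u 0) => [->|/hx //]; rewrite add0r; apply: hy.
Qed.

Lemma deg_off_ge_sum G r (I : Type) (s : seq I) (P : pred I) (F : I -> MP) :
  (forall i, P i -> deg_off_ge G r (F i)) -> deg_off_ge G r (\sum_(i <- s | P i) F i).
Proof.
by move=> hF; elim/big_ind: _ => //; [apply: deg_off_ge_zero | apply: deg_off_geD].
Qed.

Lemma deg_off_geM G r1 r2 x y :
  deg_off_ge G r1 x -> deg_off_ge G r2 y -> deg_off_ge G (r1 + r2) (x * y).
Proof.
move=> hx hy u; rewrite -mcoeff_msupp => /msuppM_le /allpairsP[[u1 u2] /= [u1x u2y ->]].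
by rewrite deg_offD leq_add // ?hx ?hy // -mcoeff_msupp.
Qed.

Lemma deg_off_geMl G r x y : deg_off_ge G r y -> deg_off_ge G r (x * y).
Proof. by move=> hy; rewrite -[r]add0n; apply: deg_off_geM. Qed.

Lemma deg_off_geXE G r u : deg_off_ge G r 'X_[u] <-> (r <= deg_off G u)%N.
Proof.
split=> [|le_r v]; first by apply; rewrite mcoeffX eqxx oner_neq0.
by rewrite mcoeffX; case: (eqVneq u v) => [<-|] //; rewrite eqxx.
Qed.

Lemma deg_off_ge_mulX G r s u :
  ~ deg_off_ge G 1 s -> deg_off_ge G r (s * 'X_[u]) -> (r <= deg_off G u)%N.
Proof.
move=> s_out hsu; have [v hv] := not_all_ex_not _ _ s_out.
have [s_v ndeg_v] := imply_to_and _ _ hv.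
have -> : deg_off G u = deg_off G (u + v)%MM by rewrite deg_offD; lia.
by apply: hsu; rewrite mcoeffMX.
Qed.

Definition kill_off G : MP -> MP :=
  mmap (@mpolyC N R) (fun i => if i \in G then 'X_i else 0).

Lemma mcoeff_kill_off G x v :
  (kill_off G x)@_v = if deg_off G v == 0%N then x@_v else 0.
Proof.
have mmap1E u : mmap1 (fun i => if i \in G then 'X_i else 0) u =
    if deg_off G u == 0%N then 'X_[u] else 0 :> MP.
  rewrite /deg_off sum_nat_eq0; case: ifP => [/forallP u_on | /negbT/forallPn[i]].
    rewrite mpolyXE_id /mmap1; apply: eq_bigr => i _.
    by case: ifP => // iG; move: (u_on i); rewrite iG => /eqP ->; rewrite !expr0.
  rewrite negb_imply => /andP[iG ui].
  by rewrite /mmap1 (bigD1 i) //= (negbTE iG) expr0n (negbTE ui) mul0r.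
rewrite /kill_off /mmap (raddf_sum (mcoeff v)) /=; case: ifP => deg_v.
  rewrite [in RHS](mpolyE x) (raddf_sum (mcoeff v)) /=; apply: eq_bigr => u _.
  rewrite mcoeffCM mcoeffZ mmap1E.
  case: (eqVneq u v) => [-> | neq_uv]; first by rewrite deg_v.
  by case: ifP; rewrite ?mcoeff0 ?mcoeffX (negbTE neq_uv) ?mulr0.
rewrite big1 // => u _; rewrite mcoeffCM mmap1E.
case: ifP => deg_u; last by rewrite mcoeff0 mulr0.
rewrite mcoeffX; case: (eqVneq u v) => [eq_uv | _]; last by rewrite mulr0.
by rewrite -eq_uv deg_u in deg_v.
Qed.

Lemma deg_off_ge1_kill G x : deg_off_ge G 1 x <-> kill_off G x = 0.
Proof.
split=> [x_off | kill0 u x_u].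
  apply/mpolyP => v; rewrite mcoeff_kill_off mcoeff0; case: eqP => // deg0.
  by apply/eqP; apply: contraT => /x_off; rewrite deg0.
rewrite lt0n; apply: contraNneq x_u => deg0.
by move: (mcoeff_kill_off G x u); rewrite kill0 mcoeff0 deg0 eqxx => <-.
Qed.

Lemma deg_off_ge1_prime G x y :
  deg_off_ge G 1 (x * y) -> deg_off_ge G 1 x \/ deg_off_ge G 1 y.
Proof.
rewrite !deg_off_ge1_kill /kill_off rmorphM => /eqP.
by rewrite mulf_eq0 => /orP[] /eqP; [left | right].
Qed.

Lemma ideal_gen_deg_off_ge G r (S : MP -> Prop) x :
  (forall g, S g -> deg_off_ge G r g) -> ideal_gen S x -> deg_off_ge G r x.
Proof.
move=> S_off [s [sS ->]]; rewrite big_seq; apply: deg_off_ge_sum => p ps.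
by apply/deg_off_geMl/S_off/sS.
Qed.

Lemma ideal_pow_deg_off_ge G r (I : MP -> Prop) x :
  (forall g, I g -> deg_off_ge G 1 g) -> ideal_pow I r x -> deg_off_ge G r x.
Proof.
move=> I_off; apply: ideal_gen_deg_off_ge => _ [s [<- [sI ->]]].
elim: s sI => [|y s IHs] sI; first by rewrite big_nil.
rewrite big_cons /= -add1n; apply: deg_off_geM; first by apply/I_off/sI/mem_head.
by apply: IHs => z zs; apply/sI; rewrite in_cons zs orbT.
Qed.

End DegOffIdeal.

Section IdealGen.
Variable R : comNzRingType.
Implicit Types (S I : R -> Prop) (x g : R).

Lemma ideal_gen_sub S g : S g -> ideal_gen S g.
Proof.
move=> Sg; exists [:: (1, g)].
by split=> [p|]; rewrite ?big_seq1 ?mul1r // inE => /eqP->.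
Qed.

Lemma ideal_pow0 I x : ideal_pow I 0 x.
Proof.
exists [:: (x, 1)]; split=> [p|]; last by rewrite big_seq1 mulr1.
by rewrite inE => /eqP->; exists [::]; rewrite big_nil.
Qed.

Lemma ideal_pow_mulr I r x g : ideal_pow I r x -> I g -> ideal_pow I r.+1 (x * g).
Proof.
move=> [s [sS ->]] Ig; exists [seq (p.1, p.2 * g) | p <- s]; split.
  move=> _ /mapP[p ps ->] /=; have [l [<- [lI ->]]] := sS p ps.
  exists (g :: l); rewrite big_cons mulrC; split=> //; split=> // y.
  by rewrite in_cons => /orP[/eqP -> | /lI].
by rewrite big_map mulr_suml; apply: eq_bigr => p _; rewrite mulrA.
Qed.

End IdealGen.

Lemma prime_ideal_bigcap (R : comNzRingType) (T : finType) (P : R -> Prop)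
    (D : T -> Prop) (Q : T -> R -> Prop) :
  is_prime_ideal P -> (forall i r x, Q i x -> Q i (r * x)) ->
  (forall x, P x <-> forall i, D i -> Q i x) ->
  exists2 i, D i & forall x, Q i x -> P x.
Proof.
move=> [_ nP1 P_prime] Q_ideal PE; apply: NNPP => no_i.
suff [y [nPy Qy]] : exists y, ~ P y /\ forall i, i \in enum T -> D i -> Q i y.
  by apply/nPy/PE => i; apply/Qy; rewrite mem_enum.
elim: (enum T) => [|i s [y [nPy Qy]]]; first by exists 1.
have [Di | nDi] := classic (D i); last first.
  by exists y; split=> // j; rewrite in_cons => /orP[/eqP -> /nDi | /Qy].
have [z [Qiz nPz]] : exists z, Q i z /\ ~ P z.
  apply: NNPP => no_z; apply: no_i; exists i => // x Qix.
  by apply: NNPP => nPx; apply: no_z; exists x.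
exists (y * z); split; first by case/P_prime.
move=> j; rewrite in_cons => /orP[/eqP -> _ | js Dj]; first exact: Q_ideal.
by rewrite mulrC; apply/Q_ideal/Qy.
Qed.

Section StanleyReisner.
Variables (k : fieldType) (n : nat).
Local Notation MP := {mpoly k[n.+2]}.
Local Notation I_Bn := (I_B k n).
Implicit Types (G : {set 'I_n.+2}) (x : MP).

Definition cycle_verts : {set 'I_n.+2} := ~: [set ord0; ord_max].

Lemma in_cycle_verts i : (i \in cycle_verts) = (1 <= i <= n)%N.
Proof. by rewrite !inE -!val_eqE /=; have := ltn_ord i; lia. Qed.

Lemma card_cycle_verts : #|cycle_verts| = n.
Proof.
have := cardsC [set ord0; @ord_max n.+1]; rewrite card_ord cards2.
by rewrite -val_eqE /= -/cycle_verts => -[].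
Qed.

Hypothesis n_ge3 : (3 <= n)%N.

Lemma B_facet_shape G : B_facet n G -> exists c i j,
  [/\ G = [set c; i; j], c \notin cycle_verts, i \in cycle_verts,
      j \in cycle_verts & i != j].
Proof.
move=> /existsP[i /existsP[j /andP[ij_edge G_eq]]].
have /and3P[iV jV neq_ij] : [&& i \in cycle_verts, j \in cycle_verts & i != j].
  rewrite !in_cycle_verts -val_eqE.
  by move: ij_edge; rewrite /Qedge_sym /Qedge /=; lia.
by case/orP: G_eq => /eqP->; [exists ord0 | exists ord_max]; exists i, j;
  split=> //; rewrite !inE eqxx ?orbT.
Qed.

Lemma card_B_facet G : B_facet n G -> #|G| = 3%N.
Proof.
move=> /B_facet_shape[c [i [j [-> cV iV jV neq_ij]]]].
have [neq_ci neq_cj] : c != i /\ c != j.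
  by split; apply: contraNneq cV => ->.
by rewrite -setUA cardsU1 cards2 neq_ij !inE negb_or neq_ci neq_cj.
Qed.

Lemma B_nonface_setU1 G j : B_facet n G -> j \notin G -> ~~ B_face n (j |: G).
Proof.
move=> fG jG; apply/existsP => -[F /andP[fF /subset_leq_card]].
by rewrite cardsU1 jG !card_B_facet.
Qed.

Lemma deg_off_cycle_verts G : B_facet n G ->
  (deg_off G (mnm_ind cycle_verts 1) <= n - 2)%N.
Proof.
move=> /B_facet_shape[c [i [j [-> _ iV jV neq_ij]]]].
have : (2 <= #|cycle_verts :&: [set c; i; j]|)%N.
  rewrite -[2%N]/(true.+1) -neq_ij -cards2 subset_leq_card //.
  by rewrite subUset !sub1set !in_setI iV jV !inE !eqxx !orbT.
by rewrite deg_off_mnm_ind muln1 cardsD card_cycle_verts; lia.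
Qed.

Lemma I_BE x : I_Bn x <-> forall G, B_facet n G -> deg_off_ge G 1 x.
Proof.
split=> [I_x G fG | x_off].
  apply: ideal_gen_deg_off_ge I_x => _ [t [nt ->]].
  rewrite prod_X_set deg_off_geXE deg_off_mnm_ind muln1 card_gt0.
  apply: contraNneq nt => /eqP; rewrite setD_eq0 => sub_tG.
  by apply/existsP; exists G; rewrite fG.
pose supp (u : 'X_{1..n.+2}) := [set i | u i != 0%N].
exists [seq (x@_u *: 'X_[u - mnm_ind (supp u) 1], \prod_(i in supp u) 'X_i)
         | u <- msupp x].
split=> [_ /mapP[u ux ->] | ].
  exists (supp u); split=> //; apply/existsP => -[F /andP[fF sub_uF]].
  have := x_off F fF u; rewrite -mcoeff_msupp => /(_ ux); rewrite lt0n /deg_off.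
  rewrite big1 // => i iF; apply/eqP; apply: contraNT iF => ui.
  by apply/(subsetP sub_uF); rewrite inE.
rewrite big_map {1}[x]mpolyE; apply: eq_bigr => u _ /=.
rewrite prod_X_set -scalerAl -mpolyXD submK //; apply/mnm_lepP => i.
by rewrite mnmE inE; case: (u i).
Qed.

Lemma associated_prime_I_B P : associated_prime I_Bn P ->
  exists2 G, B_facet n G & forall x, P x <-> deg_off_ge G 1 x.
Proof.
move=> [P_prime [h PE]].
have PE' x : P x <-> forall G, B_facet n G /\ ~ deg_off_ge G 1 h -> deg_off_ge G 1 x.
  rewrite PE I_BE; split=> [xh_off G [fG h_on] | x_off G fG].
    by case: (deg_off_ge1_prime (xh_off G fG)).
  have [h_off | h_on] := classic (deg_off_ge G 1 h); first exact: deg_off_geMl.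
  by rewrite mulrC; apply/deg_off_geMl/x_off.
have [G [fG h_on] sub_GP] :=
  prime_ideal_bigcap P_prime (fun G => @deg_off_geMl _ _ G 1) PE'.
by exists G => // x; split=> [/PE'/(_ G (conj fG h_on)) | /sub_GP].
Qed.

Lemma ideal_pow_I_B_X G r w : B_facet n G -> (r <= deg_off G w)%N ->
  ideal_pow I_Bn r 'X_[w + mnm_ind G r].
Proof.
move=> fG; elim: r w => [|r IHr] w le_rw; first exact: ideal_pow0.
have [j jG wj] : exists2 j, j \notin G & w j != 0%N.
  have : deg_off G w != 0%N by rewrite -lt0n (leq_trans _ le_rw).
  rewrite /deg_off sum_nat_eq0 => /forallPn[j].
  by rewrite negb_imply => /andP[jG wj]; exists j.
have -> : (w + mnm_ind G r.+1 = (w - U_(j) + mnm_ind G r) + mnm_ind (j |: G) 1)%MM.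
  apply/mnmP => i; rewrite !(mnmDE, mnmBE, mnmE) in_setU1.
  by case: (eqVneq i j) => [->|_]; rewrite ?(negPf jG) /=; case: (i \in G); lia.
rewrite mpolyXD -prod_X_set; apply: ideal_pow_mulr.
  by apply: IHr; have := deg_off_sub G w U_(j); rewrite deg_off_U //; lia.
by apply: ideal_gen_sub; exists (j |: G); split=> //; apply: B_nonface_setU1.
Qed.

Lemma symbolic_power_I_B_Xsub (m d : nat) (a u : 'X_{1..n.+2}) :
  (forall G, B_facet n G -> deg_off G u <= d)%N ->
  symbolic_power _ I_Bn m%:Z 'X_[a] ->
  symbolic_power _ I_Bn (m%:Z - d%:Z) 'X_[a - u].
Proof.
move=> u_le [m_le0 | a_sym]; first by left; lia.
have [le_md | lt_dm] := leqP m d; first by left; lia.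
right; have -> : `|m%:Z - d%:Z|%N = (m - d)%N by lia.
move=> P aP; have [G fG PE] := associated_prime_I_B aP.
have [s [Ps s_a]] := a_sym P aP.
have le_ma : (m <= deg_off G a)%N.
  apply: (deg_off_ge_mulX (s := s)); first by rewrite -PE.
  by apply: ideal_pow_deg_off_ge s_a => g /I_BE; apply.
exists 'X_[mnm_ind G (m - d)]; split.
  by rewrite PE deg_off_geXE deg_off_mnm_ind setDv cards0.
rewrite -mpolyXD addmC; apply: ideal_pow_I_B_X => //.
by have := deg_off_sub G a u; have := u_le G fG; lia.
Qed.

End StanleyReisner.

Theorem lemma3p9 (k : fieldType) (n m : nat) (a : 'X_{1..n.+2}) :
  (3 <= n)%N -> (1 <= m)%N ->
  let b : 'X_{1..n.+2} :=
    [multinom (if (val i == 0%N) || (val i == n.+1) then a i else (a i).-1)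
     | i < n.+2] in
  (symbolic_power _ (I_B k n) (m%:Z) ('X_[a] : {mpoly k[n.+2]}) ->
   symbolic_power _ (I_B k n) (m%:Z - (n%:Z - 2)) ('X_[b] : {mpoly k[n.+2]}))
  /\ (mdeg a <= mdeg b + n)%N
  /\ ((forall i : 'I_(n.+2), (1 <= val i <= n)%N -> a i != 0%N) ->
      (mdeg b + n)%N = mdeg a).
Proof.
move=> n_ge3 _ b.
have -> : b = (a - mnm_ind (cycle_verts n) 1)%MM.
  apply/mnmP => i; rewrite !(mnmE, mnmBE) in_cycle_verts /=.
  by have := ltn_ord i; case: ifP; case: ifP; lia.
have mdegV : mdeg (mnm_ind (cycle_verts n) 1) = n.
  by rewrite mdeg_deg_off deg_off_mnm_ind setD0 card_cycle_verts muln1.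
split; last split.
- have -> : n%:Z - 2 = (n - 2)%N%:Z by lia.
  exact/symbolic_power_I_B_Xsub/deg_off_cycle_verts.
- have := deg_off_sub set0 a (mnm_ind (cycle_verts n) 1).
  by rewrite -!mdeg_deg_off mdegV.
move=> a_inner; have /(deg_off_subK set0) : (mnm_ind (cycle_verts n) 1 <= a)%MM.
  apply/mnm_lepP => i; rewrite mnmE in_cycle_verts.
  by case: ifP => // /a_inner; rewrite lt0n.
by rewrite -!mdeg_deg_off mdegV.
Qed.
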